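(* Let $d$ be odd, let $c_1\ge\cdots\ge c_u$ be odd positive integers with $c_1\le d$, and let $H=H_d(c_1,\dots,c_u)=C_d(A(0,c_1,\dots,c_u,1))$. Let $P$ be the first summit and $Q$ the last summit of $H$. If $u=0$, then $H$ has exactly $d$ summits, $\operatorname{char}P=(0,1)$ and $\operatorname{char}Q=(0,d)$. If $u\ge1$, let $t=\tfrac12(d-c_1)$; then $t\ge0$, $H$ has exactly $(u+2)t+1$ summits, $\operatorname{char}P=(0,c_1,\dots,c_u,1)$ and $\operatorname{char}Q=(0,c_1+2t,\dots,c_u+2t,1+2t)$.
   Context: Conventions: $k$ a field; linear Nakayama algebras are basic $kQ/I$ with $Q$ a linearly oriented path; modules are finitely generated left modules, indecomposables uniserial; $|M|$ length, $\operatorname{pd}$ projective dimension, $\tau$ Auslander–Reiten translation. Simples $S_1,\dots,S_n$ with $\tau S_i=S_{i-1}$; $\omega_A=S_n$ the simple injective. Even/odd indecomposable: parity of projective dimension. For indecomposable $M$ with composition factors $F_1=\operatorname{soc}M,\dots,F_m=\operatorname{top}M$, $\operatorname{char}M=(z_1,\dots,z_m)$ with $z_i=\operatorname{pd}F_i$ if $F_i$ odd, $z_i=\operatorname{pd}M$ if $F_i$ even. Height = maximal length of indecomposables; summits = indecomposables of maximal length. Concave: Kupisch series weakly increases then weakly decreases. For concave $A$: first summit = summit $P$ with $\operatorname{rad}P$ projective; last summit = summit $Q$ with $Q/\operatorname{soc}Q$ injective. $A(\mathbf z)$ (ascent algebra): for a projective characteristic sequence $\mathbf z$ (non-negative integers,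 exactly one even entry, equal to $0$), the unique ascending (weakly increasing Kupisch series) linear Nakayama algebra with $\operatorname{char}P(\omega_{A(\mathbf z)})=\mathbf z$. $C_d$ (partial $d$-closure): a simple $S$ is $d$-closed if torsionless or the socle of a module of projective dimension $\ge d$; the $d$-cliff module $Y_A=P(\omega_A)/U$ with $U$ the largest submodule of $P(\omega_A)$ with all composition factors $d$-closed; $E_d(A)$ is the one-point extension adding a simple $T=\tau^-\omega_A$ with $\operatorname{rad}P(T)\cong Y_A$ (or $A$ itself if $Y_A=0$); $C_d(A)=E_d^t(A)$ for $t$ with zero $d$-cliff module. *)

(* A linear Nakayama algebra with simples S_1,...,S_n (tau S_i = S_{i-1},
   S_n simple injective, S_1 simple projective) is given, up to isomorphism,
   by its Kupisch series A = [:: c_1; ...; c_n], c_j = |P(S_j)|.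
   The indecomposable (uniserial) modules are encoded by pairs (b, l):
   top S_b, length l, composition factors S_{b-l+1} (= socle), ..., S_b.
   (b, l) is a module iff 1 <= b <= n and 1 <= l <= c_b. *)
From mathcomp Require Import all_boot all_order.
Set Implicit Arguments.
Unset Strict Implicit.
Unset Printing Implicit Defensive.

(* c_j, 1-based *)
Definition kup (A : seq nat) (j : nat) : nat := nth 0 A j.-1.

Definition kupisch (A : seq nat) : bool :=
  [&& 0 < size A, kup A 1 == 1 &
      all (fun j => (2 <= kup A j.+1) && (kup A j.+1 <= (kup A j).+1))
          (iota 1 (size A).-1)].

Definition ascending (A : seq nat) : bool := sorted leq A.

Definition is_module (A : seq nat) (b l : nat) : bool :=
  [&& 1 <= b, b <= size A, 1 <= l & l <= kup A b].

Definition indec (A : seq nat) : seq (nat * nat) :=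
  [seq (b, l) | b <- iota 1 (size A), l <- iota 1 (kup A b)].

Definition projective (A : seq nat) (b l : nat) : bool := l == kup A b.
(* a uniserial module is injective iff it cannot be extended on top *)
Definition injective (A : seq nat) (b l : nat) : bool :=
  (b == size A) || (kup A b.+1 < l.+1).

(* projective dimension: Omega (b,l) = (b - l, c_b - l) when not projective;
   fuel b suffices since the top index strictly decreases *)
Fixpoint pd_rec (A : seq nat) (fuel b l : nat) : nat :=
  if kup A b <= l then 0 else
  match fuel with
  | 0 => 0
  | f.+1 => (pd_rec A f (b - l) (kup A b - l)).+1
  end.
Definition pd (A : seq nat) (b l : nat) : nat := pd_rec A b b l.

(* the characteristic char M, listed from the socle F_1 to the top F_m *)
Definition charM (A : seq nat) (b l : nat) : seq nat :=
  [seq (let s := pd A i 1 in if odd s then s else pd A b l)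
  | i <- iota (b - l + 1) l].

(* omega_A = S_n, P(omega_A) = (n, c_n) *)
Definition n_of (A : seq nat) : nat := size A.

Definition is_ascent (z : seq nat) (A : seq nat) : Prop :=
  [/\ kupisch A, ascending A & charM A (n_of A) (kup A (n_of A)) = z].

Definition height (A : seq nat) : nat := foldr maxn 0 [seq m.2 | m <- indec A].
Definition summits (A : seq nat) : seq (nat * nat) :=
  [seq m <- indec A | m.2 == height A].
Definition num_summits (A : seq nat) : nat := size (summits A).

(* rad (b,l) = (b-1, l-1) (zero module when l = 1, which is projective) *)
Definition rad_projective (A : seq nat) (b l : nat) : bool :=
  (l == 1) || projective A b.-1 l.-1.
(* (b,l)/soc = (b, l-1) (zero when l = 1, which is injective) *)
Definition top_quot_injective (A : seq nat) (b l : nat) : bool :=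
  (l == 1) || injective A b l.-1.

Definition first_summit (A : seq nat) (b l : nat) : bool :=
  ((b, l) \in summits A) && rad_projective A b l.
Definition last_summit (A : seq nat) (b l : nat) : bool :=
  ((b, l) \in summits A) && top_quot_injective A b l.

(* torsionless indecomposable: isomorphic to a submodule of an indecomposable
   projective P(S_j) = (j, c_j); submodules of a uniserial module share its
   socle and have smaller top *)
Definition torsionless (A : seq nat) (b l : nat) : bool :=
  has (fun j => (j - kup A j + 1 == b - l + 1) && (b <= j)) (iota 1 (size A)).

Definition d_closed (A : seq nat) (d i : nat) : bool :=
  torsionless A i 1 ||
  has (fun m => (m.1 - m.2 + 1 == i) && (d <= pd A m.1 m.2)) (indec A).

(* U: largest submodule of P(omega_A) with all composition factors d-closed;
   the submodules of P(omega_A) have composition factors S_s0,...,S_{s0+k-1} *)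
Definition U_len (A : seq nat) (d : nat) : nat :=
  let n := n_of A in let s0 := n - kup A n + 1 in
  foldr maxn 0 [seq k <- iota 0 (kup A n).+1 | all (d_closed A d) (iota s0 k)].

(* length of the d-cliff module Y_A = P(omega_A)/U *)
Definition cliff_len (A : seq nat) (d : nat) : nat := kup A (n_of A) - U_len A d.

(* one-point extension E_d: new simple T = S_{n+1} with rad P(T) = Y_A,
   so c_{n+1} = |Y_A| + 1 *)
Definition Ed (d : nat) (A : seq nat) : seq nat :=
  if cliff_len A d == 0 then A else rcons A (cliff_len A d).+1.

Definition is_closure (d : nat) (A H : seq nat) : Prop :=
  exists t, H = iter t (Ed d) A /\ cliff_len H d = 0.

Definition first_summit_char (H : seq nat) (s : seq nat) : Prop :=
  (exists b l, first_summit H b l) /\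
  (forall b l, first_summit H b l -> charM H b l = s).
Definition last_summit_char (H : seq nat) (s : seq nat) : Prop :=
  (exists b l, last_summit H b l) /\
  (forall b l, last_summit H b l -> charM H b l = s).

(* Let A = A(z) and h = |P(omega_A)| = u + 2; above the socle, the composition
   factors of P(omega_A) have projective dimensions c_1, ..., c_u, 1.
   While the second factor of P(omega) is not d-closed, the cliff module is
   P(omega)/soc and E_d adds a projective of length h again, so the Kupisch
   series is stretched by a constant run of value h.  Along such a run two
   syzygies shift a module down by h, so projective dimensions grow by 2 every
   h steps: modules with socle the second factor of P(omega) stay below
   d = 2t + c_1 until the run has length h t, when that factor itself
   reaches projective dimension d.
   From then on E_d only adds shorter projectives, so the summits are the
   h t + 1 projectives of length h; the first is P(omega_A), the last has all
   odd entries raised by 2t.  For u = 0 the same holds with c_1 := 1. *)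

From Pilot Require Import Defs.
From mathcomp Require Import all_boot all_order zify.
Set Implicit Arguments.
Unset Strict Implicit.
Unset Printing Implicit Defensive.

(* P(S_j) has composition factors S_(pbase A j).+1, ..., S_j; the module with
   composition factors S_a.+1, ..., S_b is written (a, b]. *)
Definition pbase (A : seq nat) (j : nat) : nat := j - kup A j.
Definition pd_int (A : seq nat) (a b : nat) : nat := pd A b (b - a).
Definition pd_simple (A : seq nat) (i : nat) : nat := pd_int A i.-1 i.

Definition kupisch_spec (A : seq nat) : Prop :=
  [/\ 0 < size A, kup A 1 = 1 &
      forall j, 1 <= j -> j < size A -> 2 <= kup A j.+1 /\ kup A j.+1 <= (kup A j).+1].

Lemma kupischP A : reflect (kupisch_spec A) (kupisch A).
Proof.
apply: (iffP and3P) => [[h1 /eqP h2 /allP h3]|[h1 h2 h3]]; split=> //.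
- by move=> j j1 j2; apply/andP/h3; rewrite mem_iota; lia.
- exact/eqP.
- by apply/allP=> j; rewrite mem_iota=> hj; apply/andP/h3; lia.
Qed.

Lemma kup0 A : kup A 0 = kup A 1.
Proof. by []. Qed.

Lemma kup_cat A C i : 0 < size A -> i <= size A -> kup (A ++ C) i = kup A i.
Proof. by move=> h1 h2; rewrite /kup nth_cat ifT //; lia. Qed.

Lemma pd_rec_prefix A B f b l : (forall i, i <= b -> kup A i = kup B i) ->
  pd_rec A f b l = pd_rec B f b l.
Proof.
elim: f b l => [|f IH] b l h /=; rewrite -h //.
by case: ifP => // _; congr _.+1; rewrite IH // => i hi; apply: h; lia.
Qed.

Lemma pd_cat A C b l : 0 < size A -> b <= size A -> pd (A ++ C) b l = pd A b l.
Proof.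
move=> h1 h2; rewrite /pd; apply: pd_rec_prefix => i hi; rewrite kup_cat //; lia.
Qed.

Lemma pd_int_cat A C a b : 0 < size A -> b <= size A -> pd_int (A ++ C) a b = pd_int A a b.
Proof. by move=> h1 h2; rewrite /pd_int pd_cat. Qed.

Lemma pd_simple_cat A C i : 0 < size A -> i <= size A ->
  pd_simple (A ++ C) i = pd_simple A i.
Proof. exact: pd_int_cat. Qed.

Section Kupisch.
Variable A : seq nat.
Hypothesis hA : kupisch_spec A.

Lemma kup_gt0 j : 1 <= j <= size A -> 1 <= kup A j.
Proof.
case: hA=> _ h2 h3 /andP[j1 j2].
case: j j1 j2 => // [[|j]] _ hj; first by rewrite h2.
by have [] := h3 j.+1 erefl hj; lia.
Qed.

Lemma kup_ge2 j : 2 <= j <= size A -> 2 <= kup A j.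
Proof.
case: hA=> _ _ h3 /andP[j1 j2].
case: j j1 j2 => // [[|j]] // _ hj.
by have [] := h3 j.+1 erefl hj.
Qed.

Lemma kup_le j : 1 <= j <= size A -> kup A j <= j.
Proof.
case: hA=> _ h2 h3.
elim: j => // [[|j]] IH /andP[j1 j2]; first by rewrite h2.
have [] := h3 j.+1 erefl j2.
by have := IH ltac:(lia); lia.
Qed.

Lemma kupS_le j : 1 <= j -> j < size A -> kup A j.+1 <= (kup A j).+1.
Proof. by case: hA=> _ _ h3 j1 j2; have [] := h3 j j1 j2. Qed.

Lemma pbase_mono i j : 1 <= i -> i <= j -> j <= size A -> pbase A i <= pbase A j.
Proof.
move=> i1 ij js; elim: j ij js => [|j IH]; first lia.
rewrite leq_eqVlt => /orP[/eqP->//|ij] js.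
have := IH ij ltac:(lia); have := kupS_le (j:=j) ltac:(lia) ltac:(lia).
have := kup_le (j:=j) ltac:(lia); have := kup_le (j:=j.+1) ltac:(lia).
rewrite /pbase; lia.
Qed.

Lemma pbase_le j : 2 <= j <= size A -> pbase A j <= j - 2.
Proof. by move=> h; have := kup_ge2 h; rewrite /pbase; lia. Qed.

Lemma pd_rec_fuel f1 f2 b l : 0 < l -> b <= f1 -> b <= f2 ->
  pd_rec A f1 b l = pd_rec A f2 b l.
Proof.
have k0 : kup A 0 <= 1 by rewrite kup0; case: hA => _ -> _.
elim: f1 f2 b l => [|f1 IH] [|f2] b l l0 b1 b2 //=.
- have -> : b = 0 by lia.
  by case: ifP => //; lia.
- have -> : b = 0 by lia.
  by case: ifP => //; lia.
- by case: ifP => // hk; congr _.+1; apply: IH; lia.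
Qed.

(* The syzygy of (a, b] is (pbase b, a]. *)
Lemma pd_intE a b : a < b -> b <= size A -> pbase A b <= a ->
  pd_int A a b = if pbase A b == a then 0 else (pd_int A (pbase A b) a).+1.
Proof.
move=> ab bs ga; rewrite /pd_int /pd.
have kb := kup_le (j:=b) ltac:(lia).
case: b ab bs ga kb => [|b] ab bs ga kb //=.
case: ifP => hk.
  have -> : pbase A b.+1 = a by move: hk ga; rewrite /pbase; lia.
  by rewrite eqxx.
have -> : (pbase A b.+1 == a) = false by apply/negbTE; move: hk ga; rewrite /pbase; lia.
congr _.+1.
have -> : b.+1 - (b.+1 - a) = a by lia.
have -> : kup A b.+1 - (b.+1 - a) = a - pbase A b.+1 by rewrite /pbase; lia.
by apply: pd_rec_fuel; rewrite /pbase; lia.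
Qed.

Lemma pd_simpleE x : 2 <= x -> x <= size A ->
  pd_simple A x = if pbase A x.-1 == pbase A x then 1
                  else (pd_int A (pbase A x.-1) (pbase A x)).+2.
Proof.
move=> x2 xs.
have gx := pbase_le (j:=x) ltac:(lia).
have gm := pbase_mono (i:=x.-1) (j:=x) ltac:(lia) ltac:(lia) xs.
rewrite /pd_simple pd_intE //; try lia.
rewrite ifF; last by apply/negbTE; lia.
rewrite pd_intE //; try lia.
by case: eqP => // /eqP; rewrite eq_sym => ->.
Qed.

Lemma pd_simple_eq1 j : 2 <= j -> j <= size A -> pd_simple A j = 1 ->
  pbase A j.-1 = pbase A j.
Proof. by move=> h1 h2; rewrite pd_simpleE //; case: eqP. Qed.

Lemma pd_simple_gt0 x : 2 <= x -> x <= size A -> 1 <= pd_simple A x.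
Proof. by move=> h1 h2; rewrite pd_simpleE //; case: ifP. Qed.

(* Two syzygies shift (a, b] down by v inside a run of constant Kupisch value v. *)
Lemma pd_int_shift lo hi v a b : (forall x, lo <= x <= hi -> kup A x = v) ->
  1 <= lo -> hi <= size A -> lo <= a -> a < b -> b <= hi -> b - a < v ->
  pd_int A a b = (pd_int A (a - v) (b - v)).+2.
Proof.
move=> hv n0 ns na ab bn bav.
have kb : kup A b = v by apply: hv; lia.
have ka : kup A a = v by apply: hv; lia.
have va : v <= a by rewrite -ka; apply: kup_le; lia.
rewrite pd_intE //; try (rewrite /pbase kb; lia); try lia.
rewrite ifF; last by apply/negbTE; rewrite /pbase kb; lia.
rewrite /pbase kb pd_intE //; try (rewrite /pbase ka; lia); try lia.
rewrite ifF; last by apply/negbTE; rewrite /pbase ka; lia.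
by rewrite /pbase ka.
Qed.

End Kupisch.

Definition ascending_spec (A : seq nat) : Prop :=
  forall j, 1 <= j -> j < size A -> kup A j <= kup A j.+1.

Lemma ascendingP A : reflect (ascending_spec A) (ascending A).
Proof.
apply: (iffP (sortedP 0)) => h; last by move=> i hi; apply: (h i.+1); lia.
by case=> // j _ hj; apply: h.
Qed.

Lemma ascending_mono A x y : ascending_spec A -> 1 <= x -> x <= y -> y <= size A ->
  kup A x <= kup A y.
Proof.
move=> ha x1; elim: y => [|y IH] xy ys; first lia.
case: (eqVneq x y.+1) => [->//|ne].
by have := IH ltac:(lia) ltac:(lia); have := ha y ltac:(lia) ltac:(lia); lia.
Qed.

(* The subquotients (a, b] of P(S_j) containing its socle are bounded via
   S_(b+1), the others via S_(a+1). *)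
Definition pd_int_bounded (A : seq nat) (j : nat) : Prop :=
  forall a b, pbase A j <= a -> a < b -> b <= j ->
  (a = pbase A j -> b < j -> (pd_int A a b).+1 <= pd_simple A b.+1) /\
  (pbase A j < a -> pd_int A a b <= pd_simple A a.+1).

(* The parity pattern of the characteristic of an ascent algebra: the socle
   of P(S_j) is even, the other factors odd with non-increasing pd. *)
Definition window_shape (A : seq nat) (j : nat) : Prop :=
  [/\ ~~ odd (pd_simple A (pbase A j).+1),
      forall i, (pbase A j).+1 < i -> i <= j -> odd (pd_simple A i) &
      forall i i', (pbase A j).+1 < i -> i <= i' -> i' <= j ->
        pd_simple A i' <= pd_simple A i].

Section Ascending.
Variable A : seq nat.
Hypothesis hA : kupisch_spec A.
Hypothesis hasc : ascending_spec A.

Lemma pd_simple_ge2 j : 2 <= j -> j <= size A -> 2 <= pd_simple A j ->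
  kup A j.-1 = kup A j /\ pd_simple A j = (pd_simple A (pbase A j)).+2.
Proof.
move=> j2 js; rewrite pd_simpleE //.
case: eqP => // hne _.
have gm := pbase_mono hA (i:=j.-1) (j:=j) ltac:(lia) ltac:(lia) js.
have ha := hasc (j:=j.-1) ltac:(lia) ltac:(lia).
have k1 := kup_le hA (j:=j.-1) ltac:(lia).
have k2 := kup_le hA (j:=j) ltac:(lia).
have e : pbase A j.-1 = (pbase A j).-1.
  by move: hne gm ha k1 k2; rewrite /pbase prednK; lia.
split; first by move: e k1 k2 hne; rewrite /pbase; lia.
by rewrite e.
Qed.

Lemma bounded_pbase_pred j : 2 <= j -> j <= size A -> pbase A j.-1 = pbase A j ->
  pd_int_bounded A j.-1 -> pd_int_bounded A j.
Proof.
move=> j2 js hg IH a b ga ab bj.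
have p1 : pd_int A (pbase A j) j.-1 = 0.
  have gl := pbase_le hA (j:=j) ltac:(lia).
  by rewrite pd_intE //; [rewrite hg eqxx | lia | lia | rewrite hg].
have pj := pd_simple_gt0 hA j2 js.
case: (ltnP b j) => hb.
  have [h1 h2] := IH a b ltac:(lia) ab ltac:(lia).
  split; last by rewrite -hg; apply: h2; lia.
  move=> ea _; case: (ltnP b j.-1) => hb2; first by apply: h1; [rewrite hg|].
  have -> : b = j.-1 by lia.
  by rewrite ea p1 prednK; lia.
have eb : b = j by lia.
subst b; split=> // lt.
rewrite pd_intE //; try lia.
rewrite ifF; last by apply/negbTE; lia.
case: (ltnP a j.-1) => ha.
  by have [h1 _] := IH (pbase A j) a ltac:(lia) ltac:(lia) ltac:(lia); apply: h1.
have ea : a = j.-1 by lia.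
by subst a; rewrite p1 prednK; lia.
Qed.

Section ConstantRun.
Variable j : nat.
Hypothesis hj : 2 <= j <= size A.
Hypothesis hne1 : forall x, pbase A j < x <= j -> pd_simple A x != 1.
Local Notation v := (kup A j).

Lemma kup_run_const : v < j /\ forall x, pbase A j <= x <= j -> kup A x = v.
Proof.
have v2 := kup_ge2 hA hj.
have hk k : k <= v -> kup A (j - k) = v.
  elim: k => [|k IHk] hkv; first by rewrite subn0.
  have e1 := IHk ltac:(lia).
  set x := j - k in e1 *.
  have x2 : 2 <= x.
    case: (ltnP x 2) => // hx.
    have : x = 1 by have := kup_le hA (j:=j) ltac:(lia); rewrite /x; lia.
    by move=> ex1; move: e1; rewrite ex1; case: hA => _ -> _; lia.
  have px : 2 <= pd_simple A x.
    have := pd_simple_gt0 hA x2 ltac:(rewrite /x; lia).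
    by have := hne1 (x := x) ltac:(rewrite /x /pbase; lia); lia.
  have [l1 _] := pd_simple_ge2 x2 ltac:(rewrite /x; lia) px.
  have -> : j - k.+1 = x.-1 by rewrite /x; lia.
  by rewrite l1.
have vj : v < j.
  have := hk v (leqnn _); case: (ltnP v j) => // hvj.
  have -> : j - v = 0 by lia.
  by rewrite kup0; case: hA => _ -> _; lia.
split=> // x hx; have -> : x = j - (j - x) by lia.
by apply: hk; move: hx; rewrite /pbase; lia.
Qed.

Lemma pd_simple_run_shift x : j - v < x <= j ->
  pd_simple A x = (pd_simple A (x - v)).+2.
Proof.
move=> hx; have [vj hk] := kup_run_const.
have x2 : 2 <= x by have := kup_le hA (j := j - v) ltac:(lia); rewrite hk /pbase; lia.
have px : 2 <= pd_simple A x.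
  have := pd_simple_gt0 hA x2 ltac:(lia).
  by have := hne1 (x := x) ltac:(rewrite /pbase; lia); lia.
have [_ ->] := pd_simple_ge2 x2 ltac:(lia) px.
by rewrite /pbase hk //; rewrite /pbase; lia.
Qed.

Lemma bounded_run : pd_int_bounded A (j - v) -> pd_int_bounded A j.
Proof.
move=> IH a b ga ab bj.
have [vj hk] := kup_run_const.
have v2 := kup_ge2 hA hj.
have ggj : pbase A j = j - v by [].
have ggg : pbase A (j - v) = j - v - v by rewrite /pbase hk //; lia.
rewrite ggj in ga *.
have vjv : v <= j - v by have := kup_le hA (j := j - v) ltac:(lia); rewrite hk /pbase; lia.
case: (ltnP (b - a) v) => hba; last by split; lia.
rewrite (pd_int_shift hA (lo := j - v) (hi := j) hk) //; try lia; split.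
- move=> ea bj2.
  have [h1 _] := IH (a - v) (b - v) ltac:(rewrite ggg; lia) ltac:(lia) ltac:(lia).
  have := h1 ltac:(rewrite ggg; lia) ltac:(lia).
  rewrite (pd_simple_run_shift (x := b.+1)); last lia.
  have -> : b.+1 - v = (b - v).+1 by lia.
  lia.
- move=> lt.
  have [_ h2] := IH (a - v) (b - v) ltac:(rewrite ggg; lia) ltac:(lia) ltac:(lia).
  have := h2 ltac:(rewrite ggg; lia).
  rewrite (pd_simple_run_shift (x := a.+1)); last lia.
  have -> : a.+1 - v = (a - v).+1 by lia.
  lia.
Qed.

Lemma window_shape_run : window_shape A j -> window_shape A (j - v).
Proof.
case=> sh1 sh2 sh3; have [vj hk] := kup_run_const; have v2 := kup_ge2 hA hj.
have ggv : pbase A (j - v) = j - v - v by rewrite /pbase hk //; rewrite /pbase; lia.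
have vjv : v <= j - v by have := kup_le hA (j := j - v) ltac:(lia); rewrite hk /pbase; lia.
have shift i : j - v < i + v <= j -> pd_simple A (i + v) = (pd_simple A i).+2.
  by move=> hi; rewrite pd_simple_run_shift // addnK.
split; rewrite ggv.
- have := shift (j - v - v).+1 ltac:(lia).
  have -> : (j - v - v).+1 + v = (pbase A j).+1 by rewrite /pbase; lia.
  by move=> e; move: sh1; rewrite e /= negbK.
- move=> i h1 h2; have := sh2 (i + v) ltac:(rewrite /pbase; lia) ltac:(lia).
  by rewrite shift /= ?negbK //; lia.
- move=> i i' h1 h2 h3.
  have := sh3 (i + v) (i' + v) ltac:(rewrite /pbase; lia) ltac:(lia) ltac:(lia).
  by rewrite !shift; lia.
Qed.

End ConstantRun.

Lemma window_shape_bounded j : 1 <= j -> j <= size A ->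
  window_shape A j -> pd_int_bounded A j.
Proof.
elim/ltn_ind: j => j IHj j1 js shj; case: (shj) => sh1 sh2 sh3.
have kj1 := kup_gt0 hA (j:=j) ltac:(lia).
have kjj := kup_le hA (j:=j) ltac:(lia).
case: (ltnP (kup A j) 2) => kj.
  by move=> a b ga ab bj; rewrite /pbase in ga *; split; lia.
have j2 : 2 <= j by lia.
have oj : odd (pd_simple A j) by apply: sh2 => //; rewrite /pbase; lia.
case: (eqVneq (pd_simple A j) 1) => pj.
  have hg := pd_simple_eq1 hA j2 js pj.
  apply: bounded_pbase_pred => //; apply: IHj; try lia.
  split; rewrite hg //.
  + by move=> i h1 h2; apply: sh2; lia.
  + by move=> i i' h1 h2 h3; apply: sh3; lia.
have pj3 : 3 <= pd_simple A j by move: oj pj; case: (pd_simple A j) => [|[|[|]]].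
have hne1 x : pbase A j < x <= j -> pd_simple A x != 1.
  move=> hx; case: (eqVneq x (pbase A j).+1) => [->|ne].
    by apply: contraNneq sh1 => ->.
  by have := sh3 x j ltac:(lia) ltac:(lia) (leqnn _); lia.
have [vj _] := kup_run_const (j := j) ltac:(lia) hne1.
apply: (bounded_run (j := j) ltac:(lia) hne1).
apply: IHj; try lia.
exact: (window_shape_run (j := j) ltac:(lia) hne1 shj).
Qed.

End Ascending.

Lemma kup_rcons_size A x : kup (rcons A x) (size A).+1 = x.
Proof. by rewrite /kup /= nth_rcons ltnn eqxx. Qed.

Lemma kup_rcons A x i : 0 < size A -> i <= size A -> kup (rcons A x) i = kup A i.
Proof. by move=> h1 h2; rewrite -cats1 kup_cat. Qed.

Lemma kupisch_rcons A x : kupisch_spec A -> 2 <= x -> x <= (kup A (size A)).+1 ->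
  kupisch_spec (rcons A x).
Proof.
case=> h1 h2 h3 x2 xl; split; rewrite ?size_rcons //; first by rewrite kup_rcons //; lia.
move=> j j1 j2; case: (ltnP j (size A)) => hj; first by rewrite !kup_rcons //; try lia; exact: h3.
have -> : j = size A by lia.
by rewrite kup_rcons_size kup_rcons //; lia.
Qed.

Lemma ascending_rcons A x : kupisch_spec A -> ascending_spec A ->
  kup A (size A) <= x -> ascending_spec (rcons A x).
Proof.
case=> h1 _ _ ha hx j j1; rewrite size_rcons => j2.
case: (ltnP j (size A)) => hj; first by rewrite !kup_rcons //; try lia; exact: ha.
have -> : j = size A by lia.
by rewrite kup_rcons_size kup_rcons //; lia.
Qed.

Definition stretch (B : seq nat) (s : nat) : seq nat := B ++ nseq s (kup B (size B)).

Lemma size_stretch B s : size (stretch B s) = size B + s.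
Proof. by rewrite size_cat size_nseq. Qed.

Lemma stretchS B s : stretch B s.+1 = rcons (stretch B s) (kup B (size B)).
Proof. by rewrite /stretch -addn1 nseqD catA cats1. Qed.

(* The projective dimensions of the composition factors of P(S_j), socle first. *)
Definition window (A : seq nat) (j : nat) : seq nat :=
  [seq pd_simple A i | i <- iota (pbase A j).+1 (kup A j)].

(* An entry of the characteristic of a projective module, whose pd is 0. *)
Definition char_entry (s : nat) : nat := if odd s then s else 0.

Lemma charM_projective A b : kupisch_spec A -> 1 <= b -> b <= size A ->
  charM A b (kup A b) = map char_entry (window A b).
Proof.
move=> hA b1 bs; rewrite /charM /window -map_comp.
have -> : pd A b (kup A b) = 0 by case: b b1 {bs} => // b _; rewrite /pd /= leqnn.
have -> : b - kup A b + 1 = (pbase A b).+1 by rewrite /pbase addn1.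
apply/eq_in_map => i; rewrite mem_iota => hi /=.
by rewrite /pd_simple /pd_int; have -> : i - i.-1 = 1 by lia.
Qed.

Section Stretch.
Variable B : seq nat.
Hypothesis hB : kupisch_spec B.
Local Notation N := (size B).
Local Notation v := (kup B (size B)).

Let N1 : 1 <= N. Proof. by case: hB. Qed.
Let vN : v <= N. Proof. by apply: kup_le => //; lia. Qed.

Lemma kup_stretch s x : N <= x <= N + s -> kup (stretch B s) x = v.
Proof.
move=> hx; case: (ltnP N x) => h.
  by rewrite /kup nth_cat ifF ?nth_nseq ?ifT //; lia.
have -> : x = N by lia.
by rewrite kup_cat.
Qed.

Lemma kup_stretch_last s : kup (stretch B s) (size (stretch B s)) = v.
Proof. by rewrite size_stretch kup_stretch //; lia. Qed.

Lemma pbase_stretch_last s : pbase (stretch B s) (size (stretch B s)) = N + s - v.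
Proof. by rewrite /pbase kup_stretch_last size_stretch. Qed.

Lemma pd_int_stretch s a b : b <= N -> pd_int (stretch B s) a b = pd_int B a b.
Proof. by move=> hb; rewrite pd_int_cat. Qed.

Hypothesis v2 : 2 <= v.

Lemma kupisch_stretch s : kupisch_spec (stretch B s).
Proof.
elim: s => [|s IH]; first by rewrite /stretch cats0.
by rewrite stretchS; apply: kupisch_rcons; rewrite ?kup_stretch_last //; lia.
Qed.

Lemma ascending_stretch s : ascending_spec B -> ascending_spec (stretch B s).
Proof.
move=> ha; elim: s => [|s IH]; first by rewrite /stretch cats0.
rewrite stretchS; apply: ascending_rcons; rewrite ?kup_stretch_last //.
exact: kupisch_stretch.
Qed.

Lemma pd_int_stretch_shift s k a b :
  N + k * v <= a + v -> a < b -> b <= N + s -> b - a < v ->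
  pd_int (stretch B s) a b = 2 * k + pd_int (stretch B s) (a - k * v) (b - k * v).
Proof.
elim: k a b => [|k IH] a b h1 h2 h3 h4; first by rewrite !mul0n !subn0.
rewrite (pd_int_shift (kupisch_stretch s) (lo := N) (hi := N + s) (v := v)) //; try lia.
- rewrite IH; try lia.
  have -> : a - v - k * v = a - k.+1 * v by rewrite mulSn; lia.
  have -> : b - v - k * v = b - k.+1 * v by rewrite mulSn; lia.
  lia.
- by move=> x hx; apply: kup_stretch.
- by rewrite size_stretch.
Qed.

Lemma window_stretch k : window (stretch B (v * k)) (N + v * k) = map (addn k.*2) (window B N).
Proof.
have hk : kup (stretch B (v * k)) (N + v * k) = v by apply: kup_stretch; lia.
rewrite /window hk.
have -> : pbase (stretch B (v * k)) (N + v * k) = v * k + pbase B N by rewrite /pbase hk; lia.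
rewrite -addnS iotaDl -!map_comp; apply/eq_in_map => i; rewrite mem_iota /pbase => hi /=.
rewrite /pd_simple (pd_int_stretch_shift (k := k)); try lia.
have -> : (v * k + i).-1 - k * v = i.-1 by rewrite mulnC; lia.
have -> : v * k + i - k * v = i by rewrite mulnC; lia.
by rewrite pd_int_stretch -?mul2n //; lia.
Qed.

End Stretch.

Lemma window_rcons_succ A : kupisch_spec A ->
  let v := kup A (size A) in
  window (rcons A v.+1) (size A).+1 = rcons (window A (size A)) 1.
Proof.
move=> hA v; case: (hA) => h1 _ _.
have vs : v <= size A by apply: kup_le => //; lia.
have v1 : 1 <= v by apply: kup_gt0 => //; lia.
have hA' : kupisch_spec (rcons A v.+1) by apply: kupisch_rcons => //; lia.
rewrite /window kup_rcons_size.
have -> : pbase (rcons A v.+1) (size A).+1 = pbase A (size A) by rewrite /pbase kup_rcons_size.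
rewrite -[v.+1]addn1 iotaD map_cat /= cats1 addn1; congr rcons.
  apply/eq_in_map => i; rewrite mem_iota => hi.
  by rewrite -cats1 pd_simple_cat //; rewrite /pbase in hi; lia.
have -> : (pbase A (size A)).+1 + v = (size A).+1 by rewrite /pbase; lia.
rewrite pd_simpleE //; last by rewrite size_rcons.
by rewrite /= /pbase kup_rcons_size kup_rcons // subSS eqxx.
Qed.

(* In the ascent algebras built below, the socle factor of P(omega) has
   projective dimension one less than the largest odd entry. *)
Definition ascent_window (cs : seq nat) : seq nat := (head 1 cs).-1 :: cs.

Lemma sorted_geq_rcons cs c : sorted geq (rcons cs c) ->
  sorted geq cs /\ all (fun x => c <= x) cs.
Proof.
move=> hs; split.
  apply: subseq_sorted hs; first by move=> x y z h1 h2; apply: leq_trans h2 h1.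
  by rewrite -cats1 prefix_subseq.
move: hs; rewrite -rev_sorted rev_rcons /= => /(order_path_min (leT := leq)) h.
by rewrite -all_rev; apply: h => ???; apply: leq_trans.
Qed.

Lemma ascent_window_sub2 cs c : sorted geq (rcons cs c) -> all odd (rcons cs c) -> 3 <= c ->
  let cs2 := map (subn^~ 2) (rcons cs c) in
  [/\ sorted geq cs2, all odd cs2, sumn cs2 + 2 <= sumn (rcons cs c) &
      map (addn 2) (ascent_window cs2) = ascent_window (rcons cs c)].
Proof.
move=> hs ho c3 /=; have [_ hall] := sorted_geq_rcons hs.
have ge3 x : x \in rcons cs c -> 3 <= x.
  by rewrite mem_rcons inE => /orP[/eqP->//|hx]; have := allP hall x hx; lia.
split.
- by apply: homo_sorted hs => x y; rewrite /geq /=; lia.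
- apply/allP => x /mapP[y hy ->]; have y3 := ge3 y hy.
  by rewrite oddB ?(allP ho y hy) //; lia.
- rewrite -!cats1 map_cat !sumn_cat /=.
  suff : sumn (map (subn^~ 2) cs) <= sumn cs by lia.
  by elim: (cs) => //= x xs IH; lia.
- rewrite /ascent_window /=; congr cons.
  + by case: (cs) ge3 => [|x xs] /= hx; have := hx _ (mem_head _ _); lia.
  + by rewrite -map_comp map_id_in // => x /ge3 /=; lia.
Qed.

(* Appending 1 to [cs] is a one-point extension by a projective of length
   |P(omega)| + 1; adding 2 to all entries is a stretch of length |P(omega)|. *)
Lemma ascent_window_exists cs : sorted geq cs -> all odd cs ->
  exists A, [/\ kupisch_spec A, ascending_spec A & window A (size A) = ascent_window cs].
Proof.
move hN: (sumn cs + size cs) => N.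
elim/ltn_ind: N cs hN => N IH cs hN hs ho.
case/lastP: cs hN hs ho => [|cs c] hN hs ho.
  exists [:: 1]; split => //; first by split => // j /=; lia.
  by move=> j /=; lia.
have ho' := ho; rewrite all_rcons in ho'; case/andP: ho' => oc hocs.
have [hs' _] := sorted_geq_rcons hs.
case: (eqVneq c 1) => [ec|nc].
  subst c.
  have lt : sumn cs + size cs < N by move: hN; rewrite -cats1 sumn_cat size_cat /=; lia.
  have [A [hA ha hw]] := IH _ lt cs erefl hs' hocs.
  have v1 : 1 <= kup A (size A) by case: (hA) => ? _ _; apply: kup_gt0 => //; lia.
  exists (rcons A (kup A (size A)).+1); split.
  - by apply: kupisch_rcons => //; lia.
  - exact: ascending_rcons.
  - by rewrite size_rcons window_rcons_succ // hw; case: (cs).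
have c3 : 3 <= c by move: oc nc; case: (c) => [|[|[|]]].
have [hs2 ho2 hsum hw2] := ascent_window_sub2 hs ho c3.
set cs2 := map (subn^~ 2) (rcons cs c) in hs2 ho2 hsum hw2.
have lt : sumn cs2 + size cs2 < N by rewrite -hN size_map; lia.
have [A [hA ha hw]] := IH _ lt _ erefl hs2 ho2.
have hv : 2 <= kup A (size A).
  move: (congr1 size hw); rewrite /window size_map size_iota /= size_map size_rcons; lia.
exists (stretch A (kup A (size A) * 1)); split.
- exact: kupisch_stretch.
- exact: ascending_stretch.
- by rewrite size_stretch window_stretch // hw.
Qed.

Lemma odd_head cs : all odd cs -> odd (head 1 cs).
Proof. by case: cs => //= c cs' /andP[]. Qed.

Lemma ascent_exists cs : sorted geq cs -> all odd cs ->
  exists A, is_ascent (0 :: rcons cs 1) A.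
Proof.
move=> hs ho; have [A [hA ha hw]] := ascent_window_exists hs ho.
have [N1 _ _] := hA.
have v1 : 1 <= kup A (size A) by apply: kup_gt0 => //; lia.
have hA' : kupisch_spec (rcons A (kup A (size A)).+1) by apply: kupisch_rcons => //; lia.
exists (rcons A (kup A (size A)).+1); split.
- exact/kupischP.
- exact/ascendingP/ascending_rcons.
- rewrite /n_of charM_projective ?size_rcons //.
  rewrite window_rcons_succ // hw /ascent_window map_rcons /=.
  congr (_ :: rcons _ _).
    by rewrite /char_entry; case: (head 1 cs) (odd_head ho) => //= n /negbTE ->.
  by rewrite -[RHS]map_id; apply/eq_in_map => c hc'; rewrite /char_entry (allP ho c hc').
Qed.

Lemma foldr_maxn_ub s x : x \in s -> x <= foldr maxn 0 s.
Proof.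
elim: s => //= y s IH; rewrite inE => /orP [/eqP->|h]; first by rewrite leq_maxl.
by rewrite leq_max IH ?orbT.
Qed.

Lemma foldr_maxn_lub s y : (forall x, x \in s -> x <= y) -> foldr maxn 0 s <= y.
Proof.
elim: s => //= x s IH h; rewrite geq_max h ?mem_head //=.
by apply: IH => z hz; apply: h; rewrite inE hz orbT.
Qed.

Lemma mem_indec B b l :
  ((b, l) \in indec B) = [&& 1 <= b, b <= size B, 1 <= l & l <= kup B b].
Proof.
apply/allpairsPdep/idP.
  by case=> x [y [hx hy [-> ->]]]; move: hx hy; rewrite !mem_iota; lia.
by move=> h; exists b, l; split => //; rewrite mem_iota; lia.
Qed.

(* The socle factor of P(omega_B) is torsionless, so the cliff module is
   governed by the second composition factor of P(omega_B). *)
Definition cliff_closed (B : seq nat) (d : nat) : bool :=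
  d_closed B d (pbase B (size B)).+2.

Section Cliff.
Variables (B : seq nat) (d : nat).
Hypothesis hB : kupisch_spec B.
Local Notation N := (size B).
Local Notation v := (kup B (size B)).
Local Notation q := (pbase B (size B)).

Let N1 : 1 <= N. Proof. by case: hB. Qed.
Let v1 : 1 <= v. Proof. by apply: kup_gt0 => //; lia. Qed.

Lemma d_closed_socle : d_closed B d q.+1.
Proof.
apply/orP; left; apply/hasP; exists N; first by rewrite mem_iota; lia.
by rewrite /pbase; apply/andP; split; [apply/eqP|]; lia.
Qed.

Lemma U_lenE : U_len B d =
  foldr maxn 0 [seq k <- iota 0 v.+1 | all (d_closed B d) (iota q.+1 k)].
Proof. by rewrite /U_len /n_of /pbase addn1. Qed.

Lemma U_len_bounds : 1 <= U_len B d <= v.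
Proof.
rewrite U_lenE; apply/andP; split.
  by apply: foldr_maxn_ub; rewrite mem_filter mem_iota /= d_closed_socle; lia.
by apply: foldr_maxn_lub => x; rewrite mem_filter mem_iota => /andP[_]; lia.
Qed.

Lemma Ed_cases : Ed d B = B \/ exists x, [/\ 2 <= x, x <= v & Ed d B = rcons B x].
Proof.
have /andP[u1 uv] := U_len_bounds.
rewrite /Ed /cliff_len /n_of; case: ifP => h; [by left | right].
by exists (v - U_len B d).+1; split => //; lia.
Qed.

Hypothesis v2 : 2 <= v.

Lemma Ed_not_closed : ~~ cliff_closed B d -> Ed d B = rcons B v /\ cliff_len B d != 0.
Proof.
rewrite /cliff_closed => hn.
have u1 : U_len B d = 1.
  apply/eqP; rewrite eqn_leq; apply/andP; split; last by case/andP: U_len_bounds.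
  rewrite U_lenE; apply: foldr_maxn_lub => x; rewrite mem_filter => /andP[hx _].
  case: (leqP x 1) => // x2; move: hx; have -> : x = 2 + (x - 2) by lia.
  by rewrite iotaD all_cat => /andP[/= /and3P[_ h _] _]; rewrite h in hn.
rewrite /Ed /cliff_len /n_of u1 ifF; last by apply/negbTE; lia.
by split; [congr rcons; lia | lia].
Qed.

Lemma Ed_closed : cliff_closed B d ->
  (Ed d B = B /\ cliff_len B d = 0) \/ exists x, [/\ 2 <= x, x < v & Ed d B = rcons B x].
Proof.
rewrite /cliff_closed => hc; have /andP[_ uv] := U_len_bounds.
have u2 : 2 <= U_len B d.
  by rewrite U_lenE; apply: foldr_maxn_ub; rewrite mem_filter mem_iota /= d_closed_socle hc; lia.
rewrite /Ed /cliff_len /n_of; case: ifP => h; [left; split => //; exact/eqP | right].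
by exists (v - U_len B d).+1; split => //; lia.
Qed.

Lemma cliff_closedP :
  reflect (exists b, [/\ q.+2 <= b, b <= N & d <= pd_int B q.+1 b]) (cliff_closed B d).
Proof.
apply: (iffP orP) => [[]|[b [h1 h2 h3]]].
- case/hasP => j; rewrite mem_iota => hj /andP[/eqP e _].
  have := kup_le hB (j:=j) ltac:(lia).
  have := pbase_mono hB (i:=j) (j:=N) ltac:(lia) ltac:(lia) (leqnn _).
  by rewrite /pbase in e *; lia.
- case/hasP => [[b l]]; rewrite mem_indec => /and4P[b1 bN l1 lk] /andP[/eqP e hd] /=.
  exists b; split; [simpl in e; lia | exact bN |].
  by rewrite /pd_int; have -> : b - q.+1 = l by simpl in e; lia.
- right; apply/hasP; exists (b, b - q.+1).
    rewrite mem_indec; apply/and4P; split; try lia.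
    have := pbase_mono hB (i:=b) (j:=N) ltac:(lia) h2 (leqnn _).
    by rewrite /pbase; lia.
  by rewrite /=; apply/andP; split; [apply/eqP; lia | exact h3].
Qed.

End Cliff.

Section ClosureStretch.
Variables (B : seq nat) (d : nat).
Hypothesis hB : kupisch_spec B.
Local Notation N := (size B).
Local Notation v := (kup B (size B)).
Hypothesis v2 : 2 <= v.

Lemma iter_Ed_stretch s : (forall s', s' < s -> ~~ cliff_closed (stretch B s') d) ->
  iter s (Ed d) B = stretch B s.
Proof.
elim: s => [|s IH] h; first by rewrite /stretch cats0.
rewrite iterS IH; last by move=> s' hs'; apply: h; lia.
have [-> _] := Ed_not_closed (kupisch_stretch hB v2 s) ltac:(by rewrite kup_stretch_last)
  (h s (ltnSn _)).
by rewrite kup_stretch_last // stretchS.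
Qed.

Lemma stretch_eventually_closed : cliff_closed (stretch B (d * v)) d.
Proof.
have vN : v <= N by apply: kup_le => //; case: hB => ? _ _; lia.
apply/(cliff_closedP d (kupisch_stretch hB v2 (d * v))); first by rewrite kup_stretch_last.
rewrite pbase_stretch_last // size_stretch.
exists (N + d * v - v).+2; split => //; try lia.
rewrite (pd_int_stretch_shift hB v2 (k := d)); lia.
Qed.

End ClosureStretch.

(* Once the second factor of P(omega) is d-closed, E_d appends a strictly
   shorter projective, so induct on |P(omega)|. *)
Lemma Ed_terminates d B : kupisch_spec B -> exists t, cliff_len (iter t (Ed d) B) d = 0.
Proof.
move hv: (kup B (size B)) => v.
elim/ltn_ind: v B hv => v IH B hv hB.
case: (ltnP v 2) => v2.
  exists 0 => /=; rewrite /cliff_len /n_of hv.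
  by have /andP[] := U_len_bounds d hB; rewrite hv; lia.
have hv2 : 2 <= kup B (size B) by rewrite hv.
have ex : exists s, cliff_closed (stretch B s) d.
  by exists (d * kup B (size B)); exact: stretch_eventually_closed.
have [s hs hmin] := ex_minnP ex.
have hpl : iter s (Ed d) B = stretch B s.
  by apply: iter_Ed_stretch => // s' hs'; apply/negP => hc; have := hmin s' hc; lia.
have hk := kupisch_stretch hB hv2 s.
have [[e c0]|[x [x2 xv e]]] := Ed_closed hk ltac:(by rewrite kup_stretch_last) hs.
  by exists s; rewrite hpl.
rewrite kup_stretch_last // hv in xv.
have hk' : kupisch_spec (rcons (stretch B s) x).
  by apply: kupisch_rcons => //; rewrite kup_stretch_last // hv; lia.
have [t ht] := IH x xv (rcons (stretch B s) x) ltac:(by rewrite size_rcons kup_rcons_size) hk'.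
by exists (t + s.+1); rewrite iterD iterS hpl e.
Qed.

Lemma closure_exists d A : kupisch_spec A -> exists H, is_closure d A H.
Proof. by move=> hA; have [t ht] := Ed_terminates d hA; exists (iter t (Ed d) A), t. Qed.

Lemma kup_size_last C : kup C (size C) = last 0 C.
Proof. by case: C => // x s; rewrite /kup -nth_last. Qed.

Lemma charM_cat A C b l : 0 < size A -> b <= size A -> l <= b ->
  charM (A ++ C) b l = charM A b l.
Proof.
move=> h1 h2 h3; rewrite /charM; apply/eq_in_map => i; rewrite mem_iota => hi.
by rewrite !pd_cat //; lia.
Qed.

Definition tail_below_height (A : seq nat) (T : nat) (w : seq nat) : Prop :=
  all (fun x => x < kup A (size A)) w /\ kupisch_spec (stretch A T ++ w).

Section ClosureShape.
Variables (A : seq nat) (d T : nat).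
Hypothesis hA : kupisch_spec A.
Local Notation N := (size A).
Local Notation h := (kup A (size A)).
Hypothesis h2 : 2 <= h.
Hypothesis hT1 : forall s, s < T -> ~~ cliff_closed (stretch A s) d.
Hypothesis hT2 : cliff_closed (stretch A T) d.

Let N1 : 1 <= N. Proof. by case: hA. Qed.

Lemma Ed_tail w : tail_below_height A T w ->
  exists2 w', Ed d (stretch A T ++ w) = stretch A T ++ w' & tail_below_height A T w'.
Proof.
case: w => [|y w] [hw hkw].
  have hk := kupisch_stretch hA h2 T.
  rewrite cats0; have [[-> _]|[x [x2 xv ->]]] :=
    Ed_closed hk ltac:(by rewrite kup_stretch_last) hT2.
    by exists [::]; rewrite ?cats0.
  rewrite kup_stretch_last // in xv.
  exists [:: x]; rewrite ?cats1 //; split; first by rewrite /= xv.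
  by rewrite cats1; apply: kupisch_rcons; rewrite ?kup_stretch_last //; lia.
have hlast : kup (stretch A T ++ y :: w) (size (stretch A T ++ y :: w)) < h.
  by rewrite kup_size_last last_cat /=; apply: (allP hw); exact: mem_last.
have [->|[x [x2 xv ->]]] := Ed_cases d hkw; first by exists (y :: w).
exists (rcons (y :: w) x); rewrite -?rcons_cat //; split.
  by rewrite all_rcons hw andbT; lia.
by rewrite -rcons_cat; apply: kupisch_rcons => //; lia.
Qed.

Lemma iter_Ed_tail k : T <= k ->
  exists2 w, iter k (Ed d) A = stretch A T ++ w & tail_below_height A T w.
Proof.
have hpl := iter_Ed_stretch hA h2 hT1.
elim: k => [|k IH] hk0.
  exists [::]; last by split=> //; rewrite cats0; exact: kupisch_stretch.
  have -> : T = 0 by lia.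
  by rewrite cats0 /= /stretch cats0.
case: (ltnP k T) => hkT.
  have -> : k.+1 = T by lia.
  by exists [::]; rewrite ?cats0 //; split=> //; rewrite cats0; exact: kupisch_stretch.
have [w e hw] := IH hkT.
by rewrite iterS e; exact: Ed_tail.
Qed.

Lemma closure_tail H : is_closure d A H ->
  exists2 w, H = stretch A T ++ w & tail_below_height A T w.
Proof.
case=> k [-> hc]; case: (ltnP k T) => hk; last exact: iter_Ed_tail.
have hpl := iter_Ed_stretch (s := k) (d := d) hA h2 (fun s' hs' => hT1 (s := s') ltac:(lia)).
have [_] := Ed_not_closed (kupisch_stretch hA h2 k) ltac:(by rewrite kup_stretch_last) (hT1 hk).
by rewrite -hpl hc.
Qed.

End ClosureShape.

Section Summits.
Variables (A : seq nat) (T : nat) (w : seq nat).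
Hypothesis hA : kupisch_spec A.
Local Notation N := (size A).
Local Notation h := (kup A (size A)).
Hypothesis h2 : 2 <= h.
Hypothesis hlt : forall x, 1 <= x -> x < N -> kup A x < h.
Hypothesis hG : kup A N.-1 = h.-1.
Hypothesis hw : tail_below_height A T w.

Let N1 : 1 <= N. Proof. by case: hA. Qed.
Let hN : h <= N. Proof. by apply: kup_le => //; lia. Qed.
Local Notation H := (stretch A T ++ w).

Lemma size_closure : size H = N + T + size w.
Proof. by rewrite size_cat size_stretch. Qed.

Lemma kup_closure_head x : x <= N -> kup H x = kup A x.
Proof. by move=> hx; rewrite -catA kup_cat. Qed.

Lemma kup_closure_stretch x : N <= x <= N + T -> kup H x = h.
Proof. by move=> hx; rewrite kup_cat ?kup_stretch // size_stretch; lia. Qed.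

Lemma kup_closure_tail x : N + T < x <= size H -> kup H x < h.
Proof.
rewrite size_closure => hx; rewrite /kup nth_cat size_stretch ifF; last lia.
have hi : x.-1 - (N + T) < size w by lia.
by case: hw => /allP hw' _; apply/hw'/mem_nth.
Qed.

Lemma kup_closure_eq x : 1 <= x <= size H -> (kup H x == h) = (N <= x <= N + T).
Proof.
move=> hx; case: (boolP (N <= x <= N + T)) => hb; first by rewrite kup_closure_stretch ?eqxx.
apply/negbTE; case: (ltnP x N) => h1.
  by rewrite kup_closure_head; [have := hlt (x := x) ltac:(lia) h1; lia | lia].
by have := kup_closure_tail (x := x) ltac:(lia); lia.
Qed.

Lemma kup_closure_le x : 1 <= x <= size H -> kup H x <= h.
Proof.
move=> hx; case: (ltnP N x) => h1.
  case: (leqP x (N + T)) => h3; first by rewrite kup_closure_stretch //; lia.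
  by have := kup_closure_tail (x := x) ltac:(lia); lia.
rewrite kup_closure_head //; case: (ltnP x N) => h4; last by have -> : x = N by lia.
by have := hlt (x := x) ltac:(lia) h4; lia.
Qed.

Lemma height_closure : height H = h.
Proof.
apply/eqP; rewrite eqn_leq; apply/andP; split.
  apply: foldr_maxn_lub => x /mapP [[b l]]; rewrite mem_indec => /and4P[b1 bs l1 lk] -> /=.
  by have := kup_closure_le (x := b) ltac:(lia); lia.
apply: foldr_maxn_ub; apply/mapP; exists (N, h) => //.
by rewrite mem_indec kup_closure_stretch ?size_closure; lia.
Qed.

Lemma mem_summits_closure b l :
  ((b, l) \in summits H) = [&& l == h, N <= b & b <= N + T].
Proof.
rewrite /summits mem_filter height_closure mem_indec /=.
case: eqP => //= ->; apply/idP/idP.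
  case/and4P => b1 bs _ hb; rewrite -(kup_closure_eq (x := b)); last lia.
  by apply/eqP; have := kup_closure_le (x := b) ltac:(lia); lia.
by move=> /andP[h3 h4]; rewrite kup_closure_stretch ?size_closure; lia.
Qed.

Lemma num_summits_closure : num_summits H = T + 1.
Proof.
rewrite /num_summits /summits size_filter /indec /allpairs_dep count_flatten -map_comp.
rewrite height_closure.
have -> : [seq (count (fun m : nat * nat => m.2 == h) \o
      (fun x => [seq (x, y) | y <- iota 1 (kup H x)])) i | i <- iota 1 (size H)] =
    [seq ((N <= b <= N + T) : nat) | b <- iota 1 (size H)].
  apply/eq_in_map => b; rewrite mem_iota => hb /=.
  rewrite count_map -(kup_closure_eq (x := b)); last lia.
  rewrite (@eq_count _ _ (pred1 h)) // count_uniq_mem ?iota_uniq // mem_iota.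
  by have := kup_closure_le (x := b) ltac:(lia); lia.
rewrite sumn_count size_closure.
have -> : N + T + size w = (N.-1 + (T + 1)) + size w by lia.
rewrite iotaD iotaD !count_cat.
rewrite (@eq_in_count _ _ pred0 (iota 1 N.-1)); last by move=> x; rewrite mem_iota /=; lia.
rewrite (@eq_in_count _ _ predT (iota _ (T + 1))); last by move=> x; rewrite mem_iota /=; lia.
rewrite (@eq_in_count _ _ pred0 (iota _ (size w))); last by move=> x; rewrite mem_iota /=; lia.
by rewrite !count_pred0 count_predT size_iota addn0.
Qed.

Lemma first_summit_closure : first_summit_char H (charM A N h).
Proof.
split.
  exists N, h; rewrite /first_summit mem_summits_closure eqxx leqnn leq_addr /=.
  by rewrite /rad_projective /projective kup_closure_head ?hG ?eqxx ?orbT //; lia.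
move=> b l; rewrite /first_summit mem_summits_closure => /andP[/and3P[/eqP el h3 h4]].
rewrite /rad_projective /projective el.
have -> : (h == 1) = false by lia.
case: (ltnP N b) => hb; first by rewrite kup_closure_stretch; lia.
have -> : b = N by lia.
by rewrite -catA charM_cat.
Qed.

Lemma last_summit_closure : last_summit_char H (charM (stretch A T) (N + T) h).
Proof.
split.
  exists (N + T), h; rewrite /last_summit mem_summits_closure eqxx leq_addr leqnn /=.
  rewrite /top_quot_injective /Defs.injective size_closure.
  case: (eqVneq w [::]) => [->|ew]; first by rewrite addn0 eqxx orbT.
  have sw : 1 <= size w by case: (w) ew.
  have := kup_closure_tail (x := (N + T).+1) ltac:(rewrite size_closure; lia).
  by move=> hlt'; apply/orP; right; apply/orP; right; lia.
move=> b l; rewrite /last_summit mem_summits_closure => /andP[/and3P[/eqP el h3 h4]].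
rewrite /top_quot_injective /Defs.injective el.
have -> : (h == 1) = false by lia.
case: (ltnP b (N + T)) => hb.
  by rewrite size_closure kup_closure_stretch; lia.
have -> : b = N + T by lia.
by rewrite charM_cat ?size_stretch //; lia.
Qed.

End Summits.

Lemma sorted_geq_nth (s : seq nat) i j : sorted geq s -> i <= j -> j < size s ->
  nth 0 s j <= nth 0 s i.
Proof.
move=> hs ij js.
have tr : transitive geq by move=> x y z /= h5 h6; apply: leq_trans h6 h5.
have := sorted_leq_nth tr (fun x => leqnn x) 0 hs => /(_ i j).
by rewrite !inE; apply=> //; lia.
Qed.

Lemma char_entry_odd s c : odd c -> char_entry s = c -> s = c.
Proof. by rewrite /char_entry; case: ifP => // _ oc c0; move: oc; rewrite -c0. Qed.

Section Ascent.
Variables (A cs : seq nat).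
Hypothesis hA : kupisch_spec A.
Hypothesis ha : ascending_spec A.
Hypothesis hs : sorted geq cs.
Hypothesis ho : all odd cs.
Hypothesis hz : charM A (size A) (kup A (size A)) = 0 :: rcons cs 1.
Local Notation N := (size A).
Local Notation h := (kup A (size A)).
Local Notation m := (pbase A (size A)).

Let N1 : 1 <= N. Proof. by case: hA. Qed.
Let hN : h <= N. Proof. by apply: kup_le => //; lia. Qed.

Lemma height_ascent : h = size cs + 2.
Proof.
by have := congr1 size hz; rewrite /charM size_map size_iota /= size_rcons; lia.
Qed.

Lemma char_entry_window k : k < h ->
  char_entry (pd_simple A (m.+1 + k)) = nth 0 (0 :: rcons cs 1) k.
Proof.
move=> hk; rewrite -hz charM_projective // /window (nth_map 0) ?size_map ?size_iota //.
by rewrite (nth_map 0) ?size_iota // nth_iota.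
Qed.

Lemma pd_simple_socle : ~~ odd (pd_simple A m.+1).
Proof.
have := char_entry_window (k := 0) ltac:(rewrite height_ascent; lia).
rewrite addn0 /= /char_entry.
by case: (boolP (odd _)) => // oX /= e; move: oX; rewrite e.
Qed.

Lemma pd_simple_window k : k <= size cs -> pd_simple A (m.+2 + k) = nth 0 (rcons cs 1) k.
Proof.
move=> hk; apply: char_entry_odd.
  rewrite nth_rcons; case: ifP => [hlt|hge]; first exact/(allP ho)/mem_nth.
  by have -> : k == size cs by lia.
by rewrite addSn -addnS char_entry_window // height_ascent; lia.
Qed.

Lemma pbase_last_size : m.+2 + size cs = N.
Proof. by have := height_ascent; rewrite /pbase; lia. Qed.

Lemma pd_simple_last : pd_simple A N = 1.
Proof. by rewrite -pbase_last_size pd_simple_window // nth_rcons ltnn eqxx. Qed.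

Lemma pd_simple_second : pd_simple A m.+2 = head 1 cs.
Proof. by rewrite -[m.+2]addn0 pd_simple_window //; case: (cs). Qed.

Lemma pd_simple_le_head i : m.+2 <= i -> i <= N.-1 -> pd_simple A i <= head 1 cs.
Proof.
move=> h1 h2; have e := pbase_last_size.
have -> : i = m.+2 + (i - m.+2) by lia.
rewrite pd_simple_window ?nth_rcons ?ifT; try lia.
case: (cs) e hs => [|c cs'] e hs'; first by move: e => /=; lia.
by apply: (sorted_geq_nth (i := 0) hs'); lia.
Qed.

Lemma pbase_pred_last : pbase A N.-1 = m.
Proof.
by apply: pd_simple_eq1 => //; [have := pbase_last_size; lia | exact: pd_simple_last].
Qed.

Lemma kup_pred_last : kup A N.-1 = h.-1.
Proof.
have := pbase_pred_last; have := kup_le hA (j := N.-1) ltac:(have := pbase_last_size; lia).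
by rewrite /pbase; have := pbase_last_size; lia.
Qed.

Lemma kup_lt_height x : 1 <= x -> x < N -> kup A x < h.
Proof.
move=> x1 xN; have := ascending_mono ha x1 (y := N.-1) ltac:(lia) ltac:(lia).
by rewrite kup_pred_last height_ascent; lia.
Qed.

Lemma bounded_pred_last : pd_int_bounded A N.-1.
Proof.
have e := pbase_last_size.
apply: window_shape_bounded => //; try lia.
split; rewrite pbase_pred_last.
- exact: pd_simple_socle.
- move=> i h1 h3; have -> : i = m.+2 + (i - m.+2) by lia.
  rewrite pd_simple_window ?nth_rcons ?ifT; try lia.
  have hi : i - m.+2 < size cs by lia.
  exact/(allP ho)/mem_nth.
- move=> i i' h1 h3 h4.
  have -> : i = m.+2 + (i - m.+2) by lia.
  have -> : i' = m.+2 + (i' - m.+2) by lia.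
  rewrite !pd_simple_window ?nth_rcons ?ifT; try lia.
  by apply: sorted_geq_nth => //; lia.
Qed.

(* For cs = [::] the entry 1 plays the role of c_1, which covers u = 0. *)
Local Notation c1 := (head 1 cs).
Let h2 : 2 <= h. Proof. by rewrite height_ascent; lia. Qed.

Lemma pd_int_socle_le b : m < b -> b <= N.-1 -> pd_int A m b <= c1.-1.
Proof.
move=> h1 h3; have e := pbase_last_size; have g1 := pbase_pred_last.
case: (ltnP b N.-1) => hb.
  have [k1 _] := bounded_pred_last (a := m) (b := b) ltac:(rewrite g1; lia) h1 ltac:(lia).
  have := k1 ltac:(by rewrite g1) hb.
  by have := pd_simple_le_head (i := b.+1) ltac:(lia) ltac:(lia); lia.
have -> : b = N.-1 by lia.
by rewrite pd_intE ?g1 ?eqxx //; lia.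
Qed.

Lemma pd_int_stretch_le s a b : m < a -> a <= N.-1 -> a < b -> b - a < h -> b <= N + s ->
  pd_int (stretch A s) a b <= c1.+1.
Proof.
move=> h1 h3 h4 h5 h6; have e := pbase_last_size; have hh := height_ascent.
have g1 := pbase_pred_last.
have bnd := bounded_pred_last.
have le_head := pd_simple_le_head.
case: (ltnP b N) => hb.
  rewrite pd_int_stretch //; last lia.
  have [_ k2] := bnd a b ltac:(rewrite g1; lia) h4 ltac:(lia).
  by have := k2 ltac:(rewrite g1; lia); have := le_head a.+1 ltac:(lia) ltac:(lia); lia.
case: (eqVneq b N) => [->|ebN].
  rewrite pd_int_stretch // pd_intE //; try lia.
  rewrite ifF; last by apply/negbTE; lia.
  by have := pd_int_socle_le h1 h3; lia.
have hk : kup (stretch A s) b = h by apply: kup_stretch => //; lia.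
have hks := kupisch_stretch hA h2 s.
rewrite pd_intE ?size_stretch //; try (rewrite /pbase hk; lia).
rewrite ifF; last by apply/negbTE; rewrite /pbase hk; lia.
rewrite /pbase hk pd_int_stretch //; last lia.
have [_ k2] := bnd (b - h) a ltac:(rewrite g1; lia) ltac:(lia) ltac:(lia).
by have := k2 ltac:(rewrite g1; lia); have := le_head (b - h).+1 ltac:(lia) ltac:(lia); lia.
Qed.

Variable t : nat.
Local Notation d := (t.*2 + c1).

(* Write s.+1 = k h + r: k shifts cost 2 k, and what remains lies within
   one window of A. *)
Lemma pd_int_stretch_lt s b : s < h * t ->
  (pbase (stretch A s) (size (stretch A s))).+2 <= b -> b <= size (stretch A s) ->
  pd_int (stretch A s) (pbase (stretch A s) (size (stretch A s))).+1 b < d.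
Proof.
move=> hst; rewrite pbase_stretch_last // size_stretch => hb1 hb2.
have e := pbase_last_size.
have c1_gt0 : 0 < c1 by case: c1 (odd_head ho).
set k := s.+1 %/ h; set r := s.+1 %% h.
have hsr : s.+1 = k * h + r by rewrite /k /r -divn_eq.
have rh : r < h by rewrite /r ltn_pmod; lia.
have kt : k <= t.
  have : k * h <= t * h by rewrite mulnC in hst; lia.
  by rewrite leq_pmul2r; lia.
rewrite (pd_int_stretch_shift hA h2 (k := k)) //; try lia.
have -> : (N + s - h).+1 - k * h = m + r by rewrite /pbase; lia.
case: (eqVneq r 0) => r0.
  have := pd_int_socle_le (b := b - k * h) ltac:(rewrite /pbase; lia) ltac:(rewrite /pbase; lia).
  by rewrite r0 addn0 pd_int_stretch //; lia.
have kt2 : k < t.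
  have : k * h < t * h by rewrite mulnC in hst; lia.
  by rewrite ltn_pmul2r; lia.
have hh := height_ascent.
have := pd_int_stretch_le (s := s) (a := m + r) (b := b - k * h)
  ltac:(lia) ltac:(lia) ltac:(lia) ltac:(lia) ltac:(lia).
lia.
Qed.

Lemma stretch_not_closed s : s < h * t -> ~~ cliff_closed (stretch A s) d.
Proof.
move=> hst; apply/negP => /(cliff_closedP d (kupisch_stretch hA h2 s)).
rewrite kup_stretch_last // => /(_ h2) [b [b1 b2 b3]].
by have := pd_int_stretch_lt hst b1 b2; lia.
Qed.

Lemma stretch_closed : cliff_closed (stretch A (h * t)) d.
Proof.
have e := pbase_last_size; have hh := height_ascent.
apply/(cliff_closedP d (kupisch_stretch hA h2 _)); first by rewrite kup_stretch_last.
rewrite pbase_stretch_last // size_stretch.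
exists (N + h * t - h).+2; split; try lia.
rewrite (pd_int_stretch_shift hA h2 (k := t)) //; try lia.
have -> : (N + h * t - h).+1 - t * h = m.+1 by rewrite /pbase mulnC; lia.
have -> : (N + h * t - h).+2 - t * h = m.+2 by rewrite /pbase mulnC; lia.
by rewrite pd_int_stretch //; have := pd_simple_second; rewrite /pd_simple /=; lia.
Qed.

Lemma charM_stretch_last :
  charM (stretch A (h * t)) (N + h * t) h = 0 :: rcons [seq c + t.*2 | c <- cs] (1 + t.*2).
Proof.
have hk : kup (stretch A (h * t)) (N + h * t) = h by apply: kup_stretch => //; lia.
have hks := kupisch_stretch hA h2 (h * t).
rewrite -{3}hk charM_projective ?size_stretch //; try lia.
rewrite window_stretch // -map_comp.
pose lift y := if y == 0 then 0 else y + t.*2.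
have shift : char_entry \o addn t.*2 =1 lift \o char_entry.
  move=> x; rewrite /= /lift /char_entry oddD odd_double /=.
  by case: ifP => // ox; case: eqP => [x0|_]; [move: ox; rewrite x0 | exact: addnC].
rewrite (eq_map shift) map_comp -charM_projective // hz /= map_rcons.
congr (_ :: rcons _ _); apply/eq_in_map => c hc /=.
by have := allP ho c hc; case: c hc.
Qed.

Lemma ascent_closure_summits H : is_closure d A H ->
  [/\ num_summits H = h * t + 1,
      first_summit_char H (0 :: rcons cs 1) &
      last_summit_char H (0 :: rcons [seq c + t.*2 | c <- cs] (1 + t.*2))].
Proof.
move=> /(closure_tail hA h2 stretch_not_closed stretch_closed) [w -> hw].
split.
- exact: num_summits_closure hA h2 kup_lt_height kup_pred_last hw.
- by rewrite -hz; exact: first_summit_closure hA h2 kup_lt_height kup_pred_last hw.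
- by rewrite -charM_stretch_last; exact: last_summit_closure hA h2 kup_lt_height kup_pred_last hw.
Qed.

End Ascent.

Lemma double_half_sub_odd d c : odd d -> odd c -> c <= d -> ((d - c)./2).*2 = d - c.
Proof. by move=> od oc cd; rewrite halfK oddB // od oc subn0. Qed.

Unset Implicit Arguments.

Theorem theorem3 (d : nat) (cs : seq nat) :
  odd d -> sorted geq cs -> all odd cs -> head 0 cs <= d ->
  let z := 0 :: rcons cs 1 in
  (exists A, is_ascent z A) /\
  forall A, is_ascent z A ->
  (exists H, is_closure d A H) /\
  forall H, is_closure d A H ->
    match cs with
    | [::] =>
        [/\ num_summits H = d,
            first_summit_char H [:: 0; 1] &
            last_summit_char H [:: 0; d]]
    | c1 :: _ =>
        let t := (d - c1)./2 in
        [/\ t.*2 = d - c1,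
            num_summits H = (size cs + 2) * t + 1,
            first_summit_char H z &
            last_summit_char H (0 :: rcons [seq c + t.*2 | c <- cs] (1 + t.*2))]
    end.
Proof.
move=> od hs ho hc; cbv zeta; split; first exact: ascent_exists.
move=> A [/kupischP hA /ascendingP ha]; rewrite /n_of => hz.
split; first exact: closure_exists.
have c1d : head 1 cs <= d by case: (cs) hc od => //= _; case: (d).
have ht := double_half_sub_odd od (odd_head ho) c1d.
have hd : d = ((d - head 1 cs)./2).*2 + head 1 cs by lia.
move=> H; rewrite {1}hd => /(ascent_closure_summits hA ha hs ho hz).
rewrite (height_ascent hA hs ho hz).
case: (cs) ht c1d => [|c1 cs'] /= ht c1d [hnum hfirst hlast]; last by split.
have e : 1 + (d - 1)./2.*2 = d by lia.
by rewrite e in hlast; split => //; lia.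
Qed.
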